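(* Let $n\ge0$ and let $\mathcal V$ be a variety with $n+2$ Gumm terms. If $h\ge0$ and $m=4h+2$, then $\mathcal V$ satisfies $$\alpha(\beta\circ_{m+1}\gamma)\subseteq\alpha(\gamma\circ_{2h+2}\beta)\circ(\alpha\gamma\circ_{mn}\alpha\beta)\quad\text{and}\quad \alpha(\beta\circ_{m+1}\gamma)\subseteq(\alpha\beta\circ_{mn}\alpha\gamma)\circ\alpha(\beta\circ_{2h+2}\gamma).$$ If $h\ge1$ and $m=4h$, then $\mathcal V$ satisfies $$\alpha(\beta\circ_{m+1}\gamma)\subseteq\alpha(\beta\circ_{2h+1}\gamma)\circ(\alpha\gamma\circ_{mn}\alpha\beta).$$
   Context: Here $\alpha,\beta,\gamma$ range over congruences of algebras in $\mathcal V$. $\circ$ is relational composition, juxtaposition is intersection. For relations $X,Y$ and $m\ge1$, $X\circ_m Y$ denotes $X\circ Y\circ X\circ\cdots$ with $m$ factors; $X\circ_0Y$ is the identity relation. A variety has $n+2$ Gumm terms if it has ternary terms $p,j_1,\dots,j_{n+1}$ satisfying: $x=j_i(x,y,x)$ for all $i$; $x=p(x,z,z)$; $p(x,x,z)=j_1(x,x,z)$; $j_i(x,z,z)=j_{i+1}(x,z,z)$ for odd $i\le n$; $j_i(x,x,z)=j_{i+1}(x,x,z)$ for even $i\le n$; $j_{n+1}(x,y,z)=z$. *)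

From mathcomp Require Import all_boot.
Set Implicit Arguments. Unset Strict Implicit. Unset Printing Implicit Defensive.

Record signature := Signature { op : Type; arity : op -> nat }.

Inductive term (S : signature) (X : Type) : Type :=
  | Var : X -> term S X
  | App : forall f : op S, ('I_(arity f) -> term S X) -> term S X.
Arguments Var {S X}.
Arguments App {S X}.

Record algebra (S : signature) := Algebra {
  carrier :> Type;
  interp : forall f : op S, ('I_(arity f) -> carrier) -> carrier }.

Fixpoint eval (S : signature) (A : algebra S) (X : Type) (v : X -> A)
  (t : term S X) : A :=
  match t with
  | Var x => v x
  | App f args => @interp S A f (fun i => eval v (args i))
  end.

Definition identity (S : signature) := (term S nat * term S nat)%type.
Definition satisfies (S : signature) (A : algebra S) (e : identity S) : Prop :=
  forall v : nat -> A, eval v e.1 = eval v e.2.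

(* A variety, presented (Birkhoff) as the equational class Mod(Sigma) of a set
   of identities Sigma. *)
Definition in_variety (S : signature) (Sigma : identity S -> Prop)
  (A : algebra S) : Prop :=
  forall e, Sigma e -> satisfies A e.

Definition val3 (T : Type) (x y z : T) (i : 'I_3) : T :=
  match nat_of_ord i with 0 => x | 1 => y | _ => z end.
Definition ev3 (S : signature) (A : algebra S) (t : term S 'I_3) (x y z : A) : A :=
  eval (val3 x y z) t.

Definition has_Gumm_terms (S : signature) (Sigma : identity S -> Prop) (n : nat)
  : Prop :=
  exists (p : term S 'I_3) (j : nat -> term S 'I_3),
    forall A : algebra S, in_variety Sigma A ->
    forall x y z : A,
      (forall i, 1 <= i <= n.+1 -> ev3 (j i) x y x = x) /\
      ev3 p x z z = x /\
      ev3 p x x z = ev3 (j 1) x x z /\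
      (forall i, 1 <= i <= n -> odd i -> ev3 (j i) x z z = ev3 (j i.+1) x z z) /\
      (forall i, 1 <= i <= n -> ~~ odd i -> ev3 (j i) x x z = ev3 (j i.+1) x x z) /\
      ev3 (j n.+1) x y z = z.

Definition rel_on (T : Type) := T -> T -> Prop.

Definition is_congruence (S : signature) (A : algebra S) (R : rel_on A) : Prop :=
  (forall x, R x x) /\ (forall x y, R x y -> R y x) /\
  (forall x y z, R x y -> R y z -> R x z) /\
  (forall (f : op S) (a b : 'I_(arity f) -> A),
      (forall i, R (a i) (b i)) -> R (@interp S A f a) (@interp S A f b)).

Definition rcomp (T : Type) (X Y : rel_on T) : rel_on T :=
  fun a c => exists b, X a b /\ Y b c.
Definition rmeet (T : Type) (X Y : rel_on T) : rel_on T :=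
  fun a b => X a b /\ Y a b.
Definition rsub (T : Type) (X Y : rel_on T) : Prop :=
  forall a b, X a b -> Y a b.

(* X o_m Y = X o Y o X o ... (m factors); X o_0 Y = identity relation. *)
Fixpoint rcompn (T : Type) (m : nat) (X Y : rel_on T) : rel_on T :=
  match m with
  | 0 => fun a b => a = b
  | m'.+1 => rcomp X (rcompn m' Y X)
  end.

From mathcomp Require Import all_boot zify.
Set Implicit Arguments. Unset Strict Implicit. Unset Printing Implicit Defensive.

(* Let [alpha a c] and let a = x_0 beta x_1 gamma x_2 ... x_2t beta x_(2t+1) = c.
   Folding the walk from its middle, the elements p(a, x_(t-s), x_(t+1+s))
   form a walk of length t+1 from p(a, x_(t+1), x_(t+1)) = a to
   p(a, a, c) = j_1(a, a, c), which is beta-related to d = j_1(a, x_1, c).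
   Each j_i(a, u, c) is alpha-related to j_i(a, u, a) = a, so moving the middle
   argument of j_i along x_1, ..., x_2t (forwards for odd i, backwards for even
   i) and then switching to j_(i+1) costs 2t steps of alpha gamma o alpha beta;
   after n rounds we reach j_(n+1)(a, x, c) = c.  Taking t = 2h+1 and t = 2h
   gives the inclusions. *)

(* The factor of index [k] (counting from 0) in [rcompn _ X Y]. *)
Definition ralt (T : Type) (X Y : rel_on T) (k : nat) : rel_on T :=
  if odd k then Y else X.

Section AlternatingProducts.
Variable T : Type.
Implicit Types (X Y : rel_on T) (a b c : T).

Lemma raltS X Y k : ralt X Y k.+1 = ralt Y X k.
Proof. by rewrite /ralt /=; case: (odd k). Qed.

Lemma ralt_shift X Y k l :
  ralt (ralt X Y k) (ralt X Y k.+1) l = ralt X Y (k + l).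
Proof. by rewrite /ralt oddD /=; case: (odd k); case: (odd l). Qed.

Lemma rcompnSr k X Y a c :
  rcompn k.+1 X Y a c <-> exists b, rcompn k X Y a b /\ ralt X Y k b c.
Proof.
elim: k X Y a => [|k IH] X Y a.
  by split=> [[b [Xab <-]]|[b [-> Xbc]]]; [exists a | exists c].
split=> [[b [Xab /IH [e [be Rec]]]]|[e [[b [Xab be]] Rec]]].
  by exists e; rewrite raltS; split=> //; exists b.
by exists b; split=> //; apply/IH; exists e; rewrite -raltS.
Qed.

Lemma rcompn_snoc k X Y a b c :
  rcompn k X Y a b -> ralt X Y k b c -> rcompn k.+1 X Y a c.
Proof. by move=> Hab Hbc; apply/rcompnSr; exists b. Qed.

Lemma rcompn_trans_last k X Y a b c :
  (forall u v w, ralt X Y k u v -> ralt X Y k v w -> ralt X Y k u w) ->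
  rcompn k.+1 X Y a b -> ralt X Y k b c -> rcompn k.+1 X Y a c.
Proof.
move=> trans /rcompnSr [e [Hae Heb]] Hbc.
exact: rcompn_snoc Hae (trans _ _ _ Heb Hbc).
Qed.

Lemma rcompn_cat k l X Y a b c :
  rcompn k X Y a b -> rcompn l (ralt X Y k) (ralt X Y k.+1) b c ->
  rcompn (k + l) X Y a c.
Proof.
elim: k X Y a => [|k IH] X Y a; first by move=> /= ->.
move=> [e [Xae Heb]] Hbc; rewrite addSn; exists e; split=> //.
rewrite [ralt X Y k.+1]raltS [ralt X Y k.+2]raltS in Hbc.
exact: IH Heb Hbc.
Qed.

Lemma rcompn_cat_even k l X Y a b c : ~~ odd k ->
  rcompn k X Y a b -> rcompn l X Y b c -> rcompn (k + l) X Y a c.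
Proof.
move=> k_even Hab Hbc; apply: rcompn_cat Hab _.
by rewrite /ralt /= (negbTE k_even).
Qed.

Lemma rcompn_rev k X Y a b :
  (forall u v, X u v -> X v u) -> (forall u v, Y u v -> Y v u) ->
  rcompn k X Y a b -> rcompn k (ralt Y X k) (ralt X Y k) b a.
Proof.
move=> symX symY; elim: k X Y symX symY a => [|k IH] X Y symX symY a.
  by move=> /= ->.
move=> [e [Xae Heb]]; rewrite !raltS.
apply: rcompn_snoc (IH _ _ symY symX _ Heb) _.
by rewrite /ralt; case: (odd k); apply: symX.
Qed.

Lemma rcompn_map (T' : Type) (f : T -> T') X Y (X' Y' : rel_on T') k a b :
  (forall u v, X u v -> X' (f u) (f v)) ->
  (forall u v, Y u v -> Y' (f u) (f v)) ->
  rcompn k X Y a b -> rcompn k X' Y' (f a) (f b).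
Proof.
move=> fX fY; elim: k X Y X' Y' fX fY a => [|k IH] X Y X' Y' fX fY a.
  by move=> /= ->.
move=> [e [Xae Heb]]; exists (f e); split; first exact: fX.
exact: IH fY fX _ Heb.
Qed.

End AlternatingProducts.

Section Congruences.
Variables (S : signature) (A : algebra S).
Implicit Types R : rel_on A.

Lemma congruence_refl R : is_congruence R -> forall x, R x x.
Proof. by case. Qed.

Lemma congruence_sym R : is_congruence R -> forall x y, R x y -> R y x.
Proof. by case=> _ []. Qed.

Lemma congruence_trans R :
  is_congruence R -> forall x y z, R x y -> R y z -> R x z.
Proof. by case=> _ [_ []]. Qed.

Lemma congruence_meet R R' :
  is_congruence R -> is_congruence R' -> is_congruence (rmeet R R').
Proof.
move=> [r [s [t c]]] [r' [s' [t' c']]].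
split; first by move=> x; split.
split; first by move=> x y [Rxy R'xy]; split; [exact: s | exact: s'].
split.
  move=> x y z [Rxy R'xy] [Ryz R'yz].
  by split; [exact: (t _ _ _ Rxy Ryz) | exact: (t' _ _ _ R'xy R'yz)].
by move=> f a b Rab; split; [apply: c | apply: c'] => i; case: (Rab i).
Qed.

Lemma eval_congruence R (X : Type) (v w : X -> A) (t : term S X) :
  is_congruence R -> (forall x, R (v x) (w x)) -> R (eval v t) (eval w t).
Proof.
move=> [_ [_ [_ compat]]] Rvw; elim: t => [x|f args IH] /=; first exact: Rvw.
by apply: compat => i; apply: IH.
Qed.

Lemma ev3_congruence R (t : term S 'I_3) x y z x' y' z' :
  is_congruence R -> R x x' -> R y y' -> R z z' ->
  R (ev3 t x y z) (ev3 t x' y' z').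
Proof. by move=> CR Rx Ry Rz; apply: eval_congruence => // -[[|[|k]] Hk]. Qed.

End Congruences.

Definition gumm_terms (S : signature) (A : algebra S) (n : nat)
    (p : term S 'I_3) (j : nat -> term S 'I_3) : Prop :=
  forall x y z : A,
    (forall i, 1 <= i <= n.+1 -> ev3 (j i) x y x = x) /\
    ev3 p x z z = x /\
    ev3 p x x z = ev3 (j 1) x x z /\
    (forall i, 1 <= i <= n -> odd i -> ev3 (j i) x z z = ev3 (j i.+1) x z z) /\
    (forall i, 1 <= i <= n -> ~~ odd i -> ev3 (j i) x x z = ev3 (j i.+1) x x z) /\
    ev3 (j n.+1) x y z = z.

Section GummShift.
Variables (S : signature) (A : algebra S) (n : nat).
Variables (p : term S 'I_3) (j : nat -> term S 'I_3).
Hypothesis gumm : gumm_terms A n p j.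
Implicit Types x y z : A.

Lemma gumm_p_xzz x z : ev3 p x z z = x.
Proof. by have [_ []] := gumm x x z. Qed.

Lemma gumm_p_xxz x z : ev3 p x x z = ev3 (j 1) x x z.
Proof. by have [_ [_ []]] := gumm x x z. Qed.

Lemma gumm_j_xyx i x y : 1 <= i <= n.+1 -> ev3 (j i) x y x = x.
Proof. by have [H _] := gumm x y x; apply: H. Qed.

Lemma gumm_j_odd i x z :
  1 <= i <= n -> odd i -> ev3 (j i) x z z = ev3 (j i.+1) x z z.
Proof. by have [_ [_ [_ [H _]]]] := gumm x x z; apply: H. Qed.

Lemma gumm_j_even i x z :
  1 <= i <= n -> ~~ odd i -> ev3 (j i) x x z = ev3 (j i.+1) x x z.
Proof. by have [_ [_ [_ [_ [H _]]]]] := gumm x x z; apply: H. Qed.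

Lemma gumm_j_last x y z : ev3 (j n.+1) x y z = z.
Proof. by have [_ [_ [_ [_ [_]]]]] := gumm x y z. Qed.

Lemma rcompn_fold a k (X Y : rel_on A) u v :
  is_congruence X -> is_congruence Y -> rcompn k.*2.+1 X Y u v ->
  rcompn k.+1 (ralt X Y k) (ralt X Y k.+1) a (ev3 p a u v).
Proof.
elim: k X Y u v => [|k IH] X Y u v CX CY.
  case=> w [Xuw <-]; exists (ev3 p a u w); split=> //.
  rewrite /ralt /= -{1}(gumm_p_xzz a w).
  exact: ev3_congruence CX (congruence_refl CX a) (congruence_sym CX Xuw)
                        (congruence_refl CX w).
rewrite doubleS => -[u' [Xuu' walk]].
have [v' [u'v' v'v]] := (rcompnSr k.*2.+1 Y X u' v).1 walk.
rewrite /ralt /= odd_double /= in v'v.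
rewrite [ralt X Y k.+1]raltS [ralt X Y k.+2]raltS.
apply: rcompn_snoc (IH _ _ _ _ CY CX u'v') _.
rewrite ralt_shift addnS addnn /ralt /= odd_double.
exact: ev3_congruence CX (congruence_refl CX a) (congruence_sym CX Xuu') v'v.
Qed.

Variables alpha beta gamma : rel_on A.
Hypotheses (alphaC : is_congruence alpha) (betaC : is_congruence beta)
  (gammaC : is_congruence gamma).

Section Rounds.
Variables a c : A.
Hypothesis alpha_ac : alpha a c.
Local Notation J i u := (ev3 (j i) a u c).

Lemma gumm_j_alpha i u : 1 <= i <= n.+1 -> alpha (J i u) a.
Proof.
move=> Hi; rewrite -{2}(gumm_j_xyx a u Hi).
exact: ev3_congruence alphaC (congruence_refl alphaC a)
                      (congruence_refl alphaC u) (congruence_sym alphaC alpha_ac).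
Qed.

Lemma gumm_j_meet (R : rel_on A) i i' u u' :
  1 <= i <= n.+1 -> 1 <= i' <= n.+1 -> R (J i u) (J i' u') ->
  rmeet alpha R (J i u) (J i' u').
Proof.
move=> Hi Hi' RJ; split=> //.
exact: (congruence_trans alphaC (gumm_j_alpha u Hi)
                         (congruence_sym alphaC (gumm_j_alpha u' Hi'))).
Qed.

(* One round of the chain: move the middle argument of [j_i] along the walk
   from [u] to [v], then pass from [j_i] to [j_(i+1)] through [j_i(a,w,c)]. *)
Lemma gumm_round i k u v w :
  1 <= i <= n -> odd k -> rcompn k gamma beta u v -> beta v w ->
  J i w = J i.+1 w ->
  rcompn k.+1 (rmeet alpha gamma) (rmeet alpha beta) (J i u) (J i.+1 v).
Proof.
move=> Hi k_odd uv vw Jw.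
have Hi1 : 1 <= i <= n.+1 by lia.
have Hi2 : 1 <= i.+1 <= n.+1 by lia.
have J_meet R : is_congruence R ->
    forall x y, R x y -> rmeet alpha R (J i x) (J i y).
  move=> CR x y Rxy; apply: (gumm_j_meet Hi1 Hi1).
  exact: ev3_congruence CR (congruence_refl CR a) Rxy (congruence_refl CR c).
apply: rcompn_snoc
  (rcompn_map (f := fun x => J i x) (J_meet _ gammaC) (J_meet _ betaC) uv) _.
rewrite /ralt k_odd; apply: (gumm_j_meet Hi1 Hi2).
apply: (congruence_trans betaC (y := J i w)).
  exact: ev3_congruence betaC (congruence_refl betaC a) vw
                        (congruence_refl betaC c).
rewrite Jw; exact: ev3_congruence betaC (congruence_refl betaC a)
                     (congruence_sym betaC vw) (congruence_refl betaC c).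
Qed.

Lemma gumm_rounds k u v :
  odd k -> beta a u -> rcompn k gamma beta u v -> beta v c ->
  rcompn (k.+1 * n) (rmeet alpha gamma) (rmeet alpha beta) (J 1 u) c.
Proof.
move=> k_odd au uv vc.
have vu : rcompn k gamma beta v u.
  have := rcompn_rev (congruence_sym gammaC) (congruence_sym betaC) uv.
  by rewrite /ralt k_odd.
pose B i := J i (if odd i then u else v).
have round i : 1 <= i <= n ->
    rcompn k.+1 (rmeet alpha gamma) (rmeet alpha beta) (B i) (B i.+1).
  rewrite /B /=; case i_odd: (odd i) => /= Hi.
    exact: gumm_round Hi k_odd uv vc (gumm_j_odd a c Hi i_odd).
  exact: gumm_round Hi k_odd vu (congruence_sym betaC au)
                    (gumm_j_even a c Hi (negbT i_odd)).
have chain i : i <= n ->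
    rcompn (k.+1 * i) (rmeet alpha gamma) (rmeet alpha beta) (B 1) (B i.+1).
  elim: i => [|i IH] Hi; first by rewrite muln0.
  have Hi' : 1 <= i.+1 <= n by lia.
  have k1i_even : ~~ odd (k.+1 * i) by rewrite oddM /= k_odd.
  rewrite mulnS addnC.
  exact: rcompn_cat_even k1i_even (IH (ltnW Hi)) (round _ Hi').
by have := chain n (leqnn n); rewrite /B gumm_j_last.
Qed.

End Rounds.

Lemma gumm_shift t : 0 < t ->
  rsub (rmeet alpha (rcompn t.*2.+1 beta gamma))
       (rcomp (rmeet alpha
                (rcompn t.+1 (ralt beta gamma t) (ralt beta gamma t.+1)))
              (rcompn (t.*2 * n) (rmeet alpha gamma) (rmeet alpha beta))).
Proof.
case: t => // s _ a c [ac walk].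
have fold := rcompn_fold a betaC gammaC walk.
move: walk; rewrite doubleS => -[x1 [ax1 walk]].
have [y [x1y yc]] := (rcompnSr s.*2.+1 gamma beta x1 c).1 walk.
rewrite /ralt /= odd_double /= in yc.
exists (ev3 (j 1) a x1 c); split; last first.
  by apply: (gumm_rounds ac _ ax1 x1y yc); rewrite /= odd_double.
split; first by apply: (congruence_sym alphaC); apply: gumm_j_alpha.
have last_beta : ralt (ralt beta gamma s.+1) (ralt beta gamma s.+2) s.+1 = beta.
  by rewrite ralt_shift addnn /ralt odd_double.
apply: (rcompn_trans_last _ fold); rewrite last_beta.
  exact: congruence_trans betaC.
rewrite gumm_p_xxz.
exact: ev3_congruence betaC (congruence_refl betaC a) ax1
                      (congruence_refl betaC c).
Qed.

(* Odd-length products of symmetric relations are self-converse, so the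
   shift applied to [(c, a)] can be read backwards. *)
Lemma gumm_shift_rev t : 0 < t ->
  rsub (rmeet alpha (rcompn t.*2.+1 beta gamma))
       (rcomp (rcompn (t.*2 * n) (rmeet alpha beta) (rmeet alpha gamma))
              (rmeet alpha (rcompn t.+1 beta gamma))).
Proof.
move=> t_gt0 a c [ac walk].
have symb := congruence_sym betaC; have symg := congruence_sym gammaC.
have [d [[cd cd_walk] dc]] :
    rcomp (rmeet alpha (rcompn t.+1 (ralt beta gamma t) (ralt beta gamma t.+1)))
          (rcompn (t.*2 * n) (rmeet alpha gamma) (rmeet alpha beta)) c a.
  apply: (gumm_shift t_gt0); split; first exact: (congruence_sym alphaC ac).
  by have := rcompn_rev symb symg walk; rewrite /ralt /= odd_double.
have sym_ralt k u v : ralt beta gamma k u v -> ralt beta gamma k v u.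
  by rewrite /ralt; case: (odd k); [apply: symg | apply: symb].
exists d; split.
  have := rcompn_rev (congruence_sym (congruence_meet alphaC gammaC))
                     (congruence_sym (congruence_meet alphaC betaC)) dc.
  by rewrite /ralt oddM odd_double.
split; first exact: (congruence_sym alphaC cd).
have := rcompn_rev (sym_ralt t) (sym_ralt t.+1) cd_walk.
by rewrite /ralt /=; case: (odd t).
Qed.

End GummShift.

Theorem theorem4p5 (S : signature) (Sigma : identity S -> Prop) (n : nat)
  (HG : has_Gumm_terms Sigma n) :
  (forall h m : nat, m = 4 * h + 2 ->
     forall (A : algebra S), in_variety Sigma A ->
     forall alpha beta gamma : rel_on A,
       is_congruence alpha -> is_congruence beta -> is_congruence gamma ->
       rsub (rmeet alpha (rcompn (m + 1) beta gamma))
            (rcomp (rmeet alpha (rcompn (2 * h + 2) gamma beta))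
                   (rcompn (m * n) (rmeet alpha gamma) (rmeet alpha beta))) /\
       rsub (rmeet alpha (rcompn (m + 1) beta gamma))
            (rcomp (rcompn (m * n) (rmeet alpha beta) (rmeet alpha gamma))
                   (rmeet alpha (rcompn (2 * h + 2) beta gamma)))) /\
  (forall h m : nat, 1 <= h -> m = 4 * h ->
     forall (A : algebra S), in_variety Sigma A ->
     forall alpha beta gamma : rel_on A,
       is_congruence alpha -> is_congruence beta -> is_congruence gamma ->
       rsub (rmeet alpha (rcompn (m + 1) beta gamma))
            (rcomp (rmeet alpha (rcompn (2 * h + 1) beta gamma))
                   (rcompn (m * n) (rmeet alpha gamma) (rmeet alpha beta)))).
Proof.
have [p [j gumm]] := HG.
split=> [h m -> | h m h_gt0 ->] A inA alpha beta gamma Ca Cb Cg;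
  have gummA : gumm_terms A n p j := gumm A inA.
- have t_gt0 : 0 < 2 * h + 1 by lia.
  have -> : 4 * h + 2 + 1 = (2 * h + 1).*2.+1 by lia.
  have -> : 4 * h + 2 = (2 * h + 1).*2 by lia.
  have -> : 2 * h + 2 = (2 * h + 1).+1 by lia.
  split; last exact: (gumm_shift_rev gummA Ca Cb Cg t_gt0).
  by have := gumm_shift gummA Ca Cb Cg t_gt0; rewrite /ralt /= oddD oddM.
- have t_gt0 : 0 < 2 * h by lia.
  have -> : 4 * h + 1 = (2 * h).*2.+1 by lia.
  have -> : 4 * h = (2 * h).*2 by lia.
  have -> : 2 * h + 1 = (2 * h).+1 by lia.
  by have := gumm_shift gummA Ca Cb Cg t_gt0; rewrite /ralt /= oddM.
Qed.
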